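(* Let $T$ be a plane labelled bipartite tree with $n$ white and $m$ black vertices, where $n+m$ is even. Then the value $i(T)\in\{0,1\}$ does not depend on which white vertex is chosen as the root vertex (nor on the root edge at it). Consequently the parity (even/odd) of $T$ is well defined.
   Context: A plane labelled bipartite tree with $n$ white and $m$ black vertices is defined as follows. It is a finite tree embedded in the oriented plane, considered up to orientation-preserving homeomorphism. Its vertices are colored white and black so that adjacent vertices have different colors. The white vertices carry the distinct labels $v_1,\dots,v_n$ and the black vertices the distinct labels $u_1,\dots,u_m$. String $c(T)$: choose a white vertex $v_i$ (the root vertex) and an edge $e$ incident to it (the root edge). Walk counterclockwise around $T$, i.e. perform the contour walk around the tree keeping the tree on the left, starting at $v_i$ and first traversing $e$, until returning to $v_i$ after all edges have been traversed twice. Whenever a vertex is met for the first time, write its label. Whenever a vertex is met for the last time, write a closing bracket '')''. For example, for the path $v_1-u_1-v_2-u_2$ rooted at $v_1$, $c(T)=v_1u_1v_2u_2))))$. The string contains $n+m$ labels and $n+m$ brackets. Invariant: let - $a$ be the number of pairs of white labels $v_k,v_l$ with $v_k$ occurring before $v_l$ in $c(T)$ and $k>l$; - $b$ be the analogous number of inversions among black labels $u_k$; - $c$ be the number of pairs (black label $u$, white label $v$) with $u$ occurring before $v$ in $c(T)$; - $d$ be the number of pairs (closing bracket, label) with the bracket occurring before the label in $c(T)$; - $e_0=|n-m|/2$. Then $i(T)\in\{0,1\}$ is defined by $i(T)\equiv a+b+c+\tfrac{d+e_0}{2}\pmod 2$. The tree is called even if $i(T)=0$ and odd if $i(T)=1$.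 *)

From mathcomp Require Import all_boot.
Set Implicit Arguments. Unset Strict Implicit. Unset Printing Implicit Defensive.

(* Vertices of a bipartite tree with n white vertices v_1..v_n (inl i)
   and m black vertices u_1..u_m (inr j); label indices are 0-based. *)
Definition vert (n m : nat) : finType := ('I_n + 'I_m)%type.

Definition is_white n m (x : vert n m) : bool := if x is inl _ then true else false.

(* A plane labelled bipartite tree is given by its rotation system:
   rot x = the neighbours of x listed in counterclockwise cyclic order
   (the list matters only up to cyclic rotation). *)
Definition is_plane_bip_tree n m (rot : vert n m -> seq (vert n m)) : Prop :=
  [/\ (forall x, uniq (rot x)),
      (forall x y, (y \in rot x) = (x \in rot y)),
      (forall x y, y \in rot x -> is_white x != is_white y),
      (forall x y, connect (fun a b => b \in rot a) x y)
    & \sum_(x : vert n m) size (rot x) = 2 * (n + m).-1 ].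

(* Contour walk: a dart (x, w) is the edge x -> w traversed from x to w.
   Arriving at w from x with the tree on the left, the next edge is the
   counterclockwise successor of x in the rotation at w. *)
Definition cstep n m (rot : vert n m -> seq (vert n m)) (d : vert n m * vert n m) :=
  (d.2, next (rot d.2) d.1).

(* Sequence of vertices visited by the contour walk started at root r
   with root edge r -- u, until every edge has been traversed twice. *)
Definition contour n m (rot : vert n m -> seq (vert n m)) (r u : vert n m) : seq (vert n m) :=
  r :: map snd (traject (cstep rot) (r, u) (2 * (n + m).-1)).

Inductive tok (V : Type) := Lab of V | Cl.
Arguments Cl {V}.

(* The string c(T): at each step, write the label if the vertex is met
   for the first time, then ")" if it is met for the last time. *)
Definition cstring n m (rot : vert n m -> seq (vert n m)) (r u : vert n m) : seq (tok (vert n m)) :=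
  let s := contour rot r u in
  flatten [seq (if index (nth r s k) s == k then [:: Lab (nth r s k)] else [::])
               ++ (if (size s).-1 - index (nth r s k) (rev s) == k then [:: Cl] else [::])
          | k <- iota 0 (size s)].

Definition npairs V (P : tok V -> tok V -> bool) (s : seq (tok V)) : nat :=
  \sum_(i < size s) \sum_(j < size s | i < j) P (nth Cl s i) (nth Cl s j).

Definition white_inv n m (x y : tok (vert n m)) : bool :=
  match x, y with Lab (inl k), Lab (inl l) => l < k | _, _ => false end.
Definition black_inv n m (x y : tok (vert n m)) : bool :=
  match x, y with Lab (inr k), Lab (inr l) => l < k | _, _ => false end.
Definition black_white n m (x y : tok (vert n m)) : bool :=
  match x, y with Lab (inr _), Lab (inl _) => true | _, _ => false end.
Definition cl_lab n m (x y : tok (vert n m)) : bool :=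
  match x, y with Cl, Lab _ => true | _, _ => false end.

Definition iT n m (rot : vert n m -> seq (vert n m)) (r u : vert n m) : nat :=
  let s := cstring rot r u in
  let a := npairs (@white_inv n m) s in
  let b := npairs (@black_inv n m) s in
  let c := npairs (@black_white n m) s in
  let d := npairs (@cl_lab n m) s in
  let e0 := (if n <= m then m - n else n - m)./2 in
  (a + b + c + (d + e0)./2) %% 2.

From HB Require Import structures.
From mathcomp Require Import all_boot zify.
Set Implicit Arguments. Unset Strict Implicit. Unset Printing Implicit Defensive.

(* The contour walk is a single cycle through all 2(n+m-1) darts of the tree,
   and consecutive white roots on it are an even number of steps apart, so it
   suffices to compare the root dart (r, s) with the next dart (s, r').  The
   contour from (r, s) reads r, then a walk S around the branch of s ending
   in s, then a walk R around the rest of the tree starting in r; the contour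
   from (s, r') reads S, R, s.  In the bracket string, this moves the label of
   r behind the labels of S, which changes a + b + c by |S| modulo 2, and
   moves the bracket closing s behind R, which changes d by 2|S| - (n + m).
   Hence i(T) changes by (n + m)/2 at each step, by 0 after an even number. *)

Section TokenEq.
Variable V : eqType.

Definition tok_eqb (a b : tok V) : bool :=
  match a, b with Lab x, Lab y => x == y | Cl, Cl => true | _, _ => false end.

Lemma tok_eqP : Equality.axiom tok_eqb.
Proof.
by case=> [x|] [y|] /=; try (by constructor); apply: (iffP eqP) => [->|[]].
Qed.

HB.instance Definition _ := hasDecEq.Build (tok V) tok_eqP.

End TokenEq.

Section Tokens.
Variable V : eqType.
Implicit Types (x : V) (s pre post : seq V).

Definition isLab (t : tok V) : bool := if t is Lab _ then true else false.
Definition isCl (t : tok V) : bool := if t is Cl then true else false.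

(* The brackets written along a segment s of a walk that has visited the
   vertices of pre before s and visits those of post after it. *)
Fixpoint tokens pre s post : seq (tok V) :=
  if s is x :: s' then
    (if x \in pre then [::] else [:: Lab x]) ++
    (if x \in s' ++ post then [::] else [:: Cl]) ++ tokens (x :: pre) s' post
  else [::].

Lemma eq_tokens s pre pre' post post' :
  {in s, forall y, (y \in pre) = (y \in pre')} ->
  {in s, forall y, (y \in post) = (y \in post')} ->
  tokens pre s post = tokens pre' s post'.
Proof.
elim: s pre pre' => //= x s IH pre pre' Epre Epost.
rewrite Epre ?mem_head // !mem_cat Epost ?mem_head //; congr (_ ++ (_ ++ _)).
apply: IH => y ys; first by rewrite !in_cons Epre // in_cons ys orbT.
by rewrite Epost // in_cons ys orbT.
Qed.

Lemma tokens_cat s1 s2 pre post :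
  tokens pre (s1 ++ s2) post =
  tokens pre s1 (s2 ++ post) ++ tokens (rev s1 ++ pre) s2 post.
Proof.
elim: s1 pre => //= x s1 IH pre.
by rewrite IH catA rev_cons cat_rcons !catA.
Qed.

Lemma mem_tokens_Lab y s pre post : Lab y \in tokens pre s post -> y \in s.
Proof.
elim: s pre => //= x s IH pre; rewrite !mem_cat in_cons.
case/or3P => [||/IH->]; last exact: orbT; case: ifP => //.
by rewrite mem_seq1 => _ /eqP[->]; rewrite eqxx.
Qed.

Lemma count_Cl_tokens s pre post :
  count isCl (tokens pre s post) = count [predC post] (undup s).
Proof.
elim: s pre => //= x s IH pre; rewrite !count_cat IH mem_cat.
by case: (x \in pre); case: (boolP (x \in s)) => xs /=; case: (x \in post).
Qed.

(* Read backwards, a walk opens where it used to close, and conversely. *)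
Lemma count_Lab_tokens_rev s pre post :
  count isLab (tokens pre s post) = count isCl (tokens post (rev s) pre).
Proof.
elim: s pre => //= x s IH pre.
rewrite rev_cons -cats1 tokens_cat revK !count_cat IH /= !addn0.
by rewrite addnC; case: ifP; case: ifP.
Qed.

Lemma count_Cl_tokens0 s : count isCl (tokens [::] s [::]) = size (undup s).
Proof. by rewrite count_Cl_tokens count_predT. Qed.

Lemma count_Lab_tokens0 s : count isLab (tokens [::] s [::]) = size (undup s).
Proof.
rewrite count_Lab_tokens_rev count_Cl_tokens0.
by apply/perm_size/perm_undup => y; rewrite mem_rev.
Qed.

Lemma tokens_rcons_nil pre (A : seq V) (z : V) :
  tokens pre (rcons A z) [::] = tokens pre (rcons A z) [:: z] ++ [:: Cl].
Proof.
rewrite -cats1 !tokens_cat /= mem_seq1 eqxx !cats0 -!catA; congr (_ ++ _).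
by apply: eq_tokens => // y _; rewrite !in_cons orbA orbb.
Qed.

Lemma tokens_cons_nil r B post :
  tokens [::] (r :: B) post = Lab r :: tokens [:: r] (r :: B) post.
Proof.
rewrite /= mem_seq1 eqxx; congr (_ :: _ ++ _).
by apply: eq_tokens => // y _; rewrite !in_cons orbA orbb.
Qed.

Section Reroot.
Variables (r s : V) (A B : seq V).
Hypothesis disjoint : {in rcons A s, forall y, y \notin r :: B}.

Let r_notin_A : r \notin rcons A s.
Proof. by apply/negP => /disjoint; rewrite mem_head. Qed.

Lemma tokens_reroot_before :
  tokens [::] (r :: rcons A s ++ r :: B) [::] =
  Lab r :: tokens [::] (rcons A s) [:: s] ++ Cl :: tokens [:: r] (r :: B) [::].
Proof.
rewrite -cat1s !tokens_cat !cats0.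
have -> : tokens [::] [:: r] (rcons A s ++ r :: B) = [:: Lab r].
  by rewrite /= mem_cat mem_head orbT.
have -> : tokens (rev [:: r]) (rcons A s) (r :: B) = tokens [::] (rcons A s) [::].
  apply: eq_tokens => y yA; last by rewrite in_nil; apply/negbTE/disjoint.
  by rewrite mem_seq1 in_nil; apply: contraNF r_notin_A => /eqP<-.
rewrite tokens_rcons_nil -catA !cat1s; congr (_ :: _ ++ _ :: _).
apply: eq_tokens => // y yB; rewrite mem_cat !mem_rev !mem_seq1.
by case: (boolP (y \in rcons A s)) => // /disjoint; rewrite yB.
Qed.

Lemma tokens_reroot_after :
  tokens [::] (rcons A s ++ r :: B ++ [:: s]) [::] =
  tokens [::] (rcons A s) [:: s] ++ Lab r :: tokens [:: r] (r :: B) [::] ++ [:: Cl].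
Proof.
rewrite -cat_cons !tokens_cat !cats0.
have -> : tokens (rev (r :: B) ++ rev (rcons A s)) [:: s] [::] = [:: Cl].
  by rewrite /= mem_cat !mem_rev mem_rcons mem_head orbT.
rewrite -cat_cons -tokens_cons_nil; congr (_ ++ _ ++ _).
- apply: eq_tokens => // y yA; rewrite mem_cat.
  by rewrite (negbTE (disjoint yA)).
- apply: eq_tokens => y yB; rewrite ?mem_rev ?mem_seq1 in_nil.
    by apply: contraTF yB => /disjoint.
  by apply: contraTF yB => /eqP->; apply: disjoint; rewrite mem_rcons mem_head.
Qed.

End Reroot.

End Tokens.
Arguments isLab {V}.
Arguments isCl {V}.

Section TokensNth.
Variables (V : eqType) (x0 : V).
Implicit Types (s pre post : seq V).

Lemma tokens_flatten s pre post :
  tokens pre s post = flatten [seq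
    (if nth x0 s k \in take k s ++ pre then [::] else [:: Lab (nth x0 s k)]) ++
    (if nth x0 s k \in drop k.+1 s ++ post then [::] else [:: Cl])
  | k <- iota 0 (size s)].
Proof.
elim: s pre => //= x s IH pre.
rewrite drop0 IH -[1]/(1 + 0) iotaDl -map_comp -catA; do 2 congr (_ ++ _).
congr flatten; apply: eq_map => k /=.
by rewrite add0n in_cons !mem_cat orbCA.
Qed.

Lemma index_nth_eq s k : k < size s ->
  (index (nth x0 s k) s == k) = (nth x0 s k \notin take k s).
Proof.
move=> ks; set y := nth x0 s k.
rewrite -{1}(cat_take_drop k s) (drop_nth x0 ks) -/y index_cat.
have sz : size (take k s) = k by rewrite size_take ks.
case: ifP => [|_]; last by rewrite /= eqxx addn0 sz eqxx.
by rewrite -index_mem sz => /ltn_eqF ->.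
Qed.

Lemma index_rev_nth_eq s k : k < size s ->
  ((size s).-1 - index (nth x0 s k) (rev s) == k) = (nth x0 s k \notin drop k.+1 s).
Proof.
move=> ks; set y := nth x0 s k.
have E : s = take k s ++ y :: drop k.+1 s by rewrite -(drop_nth x0 ks) cat_take_drop.
have sz : size (take k s) = k by rewrite size_take ks.
have szs : size s = k + (size (drop k.+1 s)).+1 by rewrite {1}E size_cat sz.
rewrite {2}E rev_cat rev_cons cat_rcons index_cat mem_rev size_rev /= eqxx.
case: ifP => [yin|_] /=; last by apply/eqP; lia.
have := yin; rewrite -mem_rev -index_mem size_rev => lt.
by apply/negbTE/eqP; lia.
Qed.

End TokensNth.

Lemma cstring_tokens n m (rot : vert n m -> seq (vert n m)) r u :
  cstring rot r u = tokens [::] (contour rot r u) [::].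
Proof.
rewrite /cstring (tokens_flatten r); congr flatten; apply/eq_in_map => k.
rewrite mem_iota add0n => /andP[_ ks].
by rewrite index_nth_eq // index_rev_nth_eq // !cats0 !if_neg.
Qed.

Section Pairs.
Variable T : Type.
Implicit Types (w : T -> T -> nat) (s : seq T).

Fixpoint pairs w s : nat :=
  if s is x :: s' then \sum_(y <- s') w x y + pairs w s' else 0.

Definition cross w s1 s2 : nat := \sum_(x <- s1) \sum_(y <- s2) w x y.

Lemma pairs_seq1 w x : pairs w [:: x] = 0.
Proof. by rewrite /= big_nil. Qed.

Lemma pairs_cat w s1 s2 : pairs w (s1 ++ s2) = pairs w s1 + pairs w s2 + cross w s1 s2.
Proof.
elim: s1 => [|x s1 IH] /=; first by rewrite /cross big_nil addn0.
by rewrite IH /cross big_cons big_cat /=; lia.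
Qed.

Lemma pairsD w1 w2 s : pairs (fun x y => w1 x y + w2 x y) s = pairs w1 s + pairs w2 s.
Proof. by elim: s => //= x s ->; rewrite big_split /=; lia. Qed.

Lemma cross_catl w s1 s2 s3 : cross w (s1 ++ s2) s3 = cross w s1 s3 + cross w s2 s3.
Proof. by rewrite /cross big_cat. Qed.

Lemma cross_catr w s1 s2 s3 : cross w s1 (s2 ++ s3) = cross w s1 s2 + cross w s1 s3.
Proof. by rewrite /cross -big_split; apply: eq_bigr => x _; rewrite big_cat. Qed.

Lemma cross_seq1l w x s : cross w [:: x] s = \sum_(y <- s) w x y.
Proof. by rewrite /cross big_seq1. Qed.

Lemma cross_seq1r w x s : cross w s [:: x] = \sum_(y <- s) w y x.
Proof. by rewrite /cross; apply: eq_bigr => y _; rewrite big_seq1. Qed.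

End Pairs.

Lemma sum_triangle_recl (F : nat -> nat -> nat) k :
  \sum_(i < k.+1) \sum_(j < k.+1 | i < j) F i j =
  \sum_(j < k) F 0 j.+1 + \sum_(i < k) \sum_(j < k | i < j) F i.+1 j.+1.
Proof.
rewrite big_ord_recl; congr (_ + _).
  by rewrite big_mkcond big_ord_recl /= add0n.
apply: eq_bigr => i _.
by rewrite big_mkcond big_ord_recl /= add0n [RHS]big_mkcond.
Qed.

Lemma npairs_pairs V (P : tok V -> tok V -> bool) s :
  npairs P s = pairs (fun x y => nat_of_bool (P x y)) s.
Proof.
elim: s => [|x s IH]; first by rewrite /npairs big_ord0.
rewrite /npairs /= (sum_triangle_recl (fun i j => P (nth Cl (x :: s) i) (nth Cl (x :: s) j))).
by rewrite /= -IH (big_nth Cl) big_mkord.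
Qed.

Section Statistics.
Variables n m : nat.
Local Notation V := (vert n m).

Definition inv_w (x y : tok V) : nat := white_inv x y + black_inv x y + black_white x y.
Definition clab_w (x y : tok V) : nat := cl_lab x y.

Lemma npairs_inv s : npairs (@white_inv n m) s + npairs (@black_inv n m) s +
                     npairs (@black_white n m) s = pairs inv_w s.
Proof. by rewrite !npairs_pairs -!pairsD. Qed.

Lemma npairs_clab s : npairs (@cl_lab n m) s = pairs clab_w s.
Proof. exact: npairs_pairs. Qed.

Lemma inv_w_swap x y : x != y -> inv_w (Lab x) (Lab y) + inv_w (Lab y) (Lab x) = 1.
Proof.
rewrite /inv_w; case: x => [k|k]; case: y => [l|l] //= ne;
  have : (k : nat) != l by apply: contra ne => /eqP/val_inj ->.
all: by case: ltngtP.
Qed.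

Lemma cross_inv_Cll s : cross inv_w [:: Cl] s = 0.
Proof. by rewrite cross_seq1l big1. Qed.

Lemma cross_inv_Clr s : cross inv_w s [:: Cl] = 0.
Proof. by rewrite cross_seq1r big1 // => -[[x|x]|] _. Qed.

Lemma cross_inv_Lab r P : {in P, forall t, t != Lab r} ->
  cross inv_w [:: Lab r] P + cross inv_w P [:: Lab r] = count isLab P.
Proof.
rewrite cross_seq1l cross_seq1r -big_split.
elim: P => [|t P IH] notr; first by rewrite big_nil.
rewrite big_cons /= IH => [|y yP]; last by apply: notr; rewrite in_cons yP orbT.
case: t notr => [y|] notr /=; last by rewrite /inv_w; case: r {notr IH}.
by rewrite inv_w_swap // eq_sym; apply: contraNneq (notr _ (mem_head _ _)) => ->.
Qed.

Lemma cross_clab P Q : cross clab_w P Q = count isCl P * count isLab Q.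
Proof.
elim: P => [|t P IH]; first by rewrite /cross big_nil.
rewrite -cat1s cross_catl IH cross_seq1l; case: t => [x|] /=; first by rewrite big1.
rewrite mulSn; congr (_ + _); clear IH.
by elim: Q => [|[y|] Q IHQ]; rewrite ?big_nil ?big_cons //= IHQ.
Qed.

Lemma odd_pairs_inv_reroot r P Q : {in P, forall t, t != Lab r} ->
  odd (pairs inv_w (Lab r :: P ++ Cl :: Q) + pairs inv_w (P ++ Lab r :: Q ++ [:: Cl]))
  = odd (count isLab P).
Proof.
move=> notr; rewrite -(cross_inv_Lab notr).
rewrite -[Lab r :: _]cat1s -[Cl :: Q]cat1s -[Lab r :: Q ++ _]cat1s !pairs_cat.
by rewrite !cross_catr !pairs_seq1 !cross_inv_Cll !cross_inv_Clr; lia.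
Qed.

Lemma pairs_clab_reroot r P Q :
  pairs clab_w (Lab r :: P ++ Cl :: Q) + count isCl P =
  pairs clab_w (P ++ Lab r :: Q ++ [:: Cl]) + count isLab Q.
Proof.
rewrite -[Lab r :: _]cat1s -[Cl :: Q]cat1s -[Lab r :: Q ++ _]cat1s !pairs_cat.
by rewrite !cross_catr !pairs_seq1 !cross_clab /=; lia.
Qed.

End Statistics.
Arguments inv_w {n m}.
Arguments clab_w {n m}.

Section ConnectedDarts.
Variables (T : finType) (e : rel T).

Lemma connect_exit (X : {pred T}) x y : x \in X -> y \notin X -> connect e x y ->
  exists a b, [/\ a \in X, b \notin X & e a b].
Proof.
move=> xX yX /connectP[p pth ey]; rewrite {}ey in yX.
elim: p x xX pth yX => [|z p IH] x xX /=; first by rewrite xX.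
case/andP=> exz pth yX; case: (boolP (z \in X)) => zX; first exact: IH zX pth yX.
by exists x, z.
Qed.

Definition inner_darts (X : {set T}) : {set T * T} :=
  [set d | [&& e d.1 d.2, d.1 \in X & d.2 \in X]].

Hypothesis e_sym : symmetric e.

Lemma inner_darts_grow (X : {set T}) a b : a \in X -> b \notin X -> e a b ->
  #|inner_darts X| + 2 <= #|inner_darts (b |: X)|.
Proof.
move=> aX bX eab; have ab : (a, b) != (b, a).
  by rewrite xpair_eqE negb_and; apply/orP; left; apply: contraNneq bX => <-.
have outX d : d.1 = b \/ d.2 = b -> d \notin inner_darts X.
  by rewrite !inE; case=> ->; rewrite (negbTE bX) ?andbF.
have sub : (a, b) |: ((b, a) |: inner_darts X) \subset inner_darts (b |: X).
  apply/subsetP => d; rewrite !in_setU1 => /or3P[/eqP->|/eqP->|].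
  - by rewrite !inE /= eab eqxx aX orbT.
  - by rewrite !inE /= e_sym eab eqxx aX orbT.
  - by rewrite !inE => /and3P[-> -> ->]; rewrite !orbT.
apply: leq_trans (subset_leq_card sub).
rewrite !cardsU1 in_setU1 (negbTE ab) /= !outX /=; [by rewrite !add1n addn2 | by left | by right].
Qed.

Lemma connected_darts_lb : (forall x y, connect e x y) ->
  2 * #|T|.-1 <= #|[set d : T * T | e d.1 d.2]|.
Proof.
move=> conn; have [->|/card_gt0P[x0 _]] := posnP #|T|; first by [].
have grow k : k < #|T| -> exists X : {set T}, #|X| = k.+1 /\ 2 * k <= #|inner_darts X|.
  elim: k => [_|k IH lt]; first by exists [set x0]; rewrite cards1.
  have [X [cX dX]] := IH (ltnW lt).
  have /subsetPn[y _ yX] : ~~ ([set: T] \subset X).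
    by apply: contraTN lt => /subset_leq_card; rewrite cardsT cX; lia.
  have /card_gt0P[x xX] : 0 < #|X| by rewrite cX.
  have [a [b [aX bX eab]]] := connect_exit xX yX (conn x y).
  exists (b |: X); split; first by rewrite cardsU1 bX cX.
  by have := inner_darts_grow aX bX eab; lia.
have lt : #|T|.-1 < #|T| by rewrite ltn_predL; apply/card_gt0P; exists x0.
have [X [_ dX]] := grow _ lt.
apply: leq_trans dX (subset_leq_card _).
by apply/subsetP => d; rewrite !inE => /andP[].
Qed.

End ConnectedDarts.

Section PlaneTree.
Variables (n m : nat) (rot : vert n m -> seq (vert n m)).
Local Notation V := (vert n m).
Local Notation f := (cstep rot).
Hypothesis tree : is_plane_bip_tree rot.

Let rot_uniq x : uniq (rot x). Proof. by case: tree. Qed.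
Let mem_rot_sym x y : (y \in rot x) = (x \in rot y). Proof. by case: tree. Qed.
Let rot_color x y : y \in rot x -> is_white x != is_white y.
Proof. by case: tree => _ _ col _ _; apply: col. Qed.
Let rot_connect x y : connect (fun a b => b \in rot a) x y. Proof. by case: tree. Qed.

Definition darts : {set V * V} := [set d | d.2 \in rot d.1].

Lemma card_vert : #|V| = n + m.
Proof. by rewrite card_sum !card_ord. Qed.

Lemma card_darts : #|darts| = 2 * (n + m).-1.
Proof.
case: tree => _ _ _ _ <-; rewrite -sum1_card.
rewrite (eq_bigl (fun d : V * V => xpredT d.1 && (d.2 \in rot d.1))) => [|d]; last first.
  by rewrite inE.
rewrite -(pair_big_dep xpredT (fun x y => y \in rot x) (fun _ _ => 1)) /=.
by apply: eq_bigr => x _; rewrite sum1_card; apply/card_uniqP.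
Qed.

Lemma dart_neq x y : y \in rot x -> x != y.
Proof. by move/rot_color; apply: contraNneq => ->. Qed.

Lemma cstep_inj : injective f.
Proof.
by move=> [x y] [x' y'] [/= <-] /(can_inj (prev_next (rot_uniq _))) ->.
Qed.

Lemma cstep_dart d : d \in darts -> f d \in darts.
Proof. by case: d => x y; rewrite !inE /= mem_next -mem_rot_sym. Qed.

Lemma iter_cstep_dart k d : d \in darts -> iter k f d \in darts.
Proof. by move=> dD; elim: k => //= k; apply: cstep_dart. Qed.

Lemma is_white_iter_cstep k d : d \in darts ->
  is_white (iter k f d).1 = (is_white d.1 == ~~ odd k).
Proof.
move=> dD; elim: k => [|k IH] /=; first by case: (is_white d.1).
have := iter_cstep_dart k dD; rewrite inE => /rot_color.
rewrite IH; case: (is_white (iter k f d).2); case: (odd k);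
  by case: (is_white d.1).
Qed.

Definition cut_edge x y : rel V :=
  fun a b => (b \in rot a) && ((a, b) \notin [:: (x, y); (y, x)]).

Lemma cut_edge_sym x y : symmetric (cut_edge x y).
Proof.
move=> a b; rewrite /cut_edge mem_rot_sym !inE !xpair_eqE.
by rewrite orbC (andbC (b == y)) (andbC (b == x)).
Qed.

(* A tree has too few edges to stay connected after losing one. *)
Lemma cut_edge_disconnects x y : y \in rot x -> ~~ connect (cut_edge x y) y x.
Proof.
move=> yx; apply/negP => cyx.
have csym := sym_connect_sym (cut_edge_sym x y).
have conn a b : connect (cut_edge x y) a b.
  apply: connect_sub (rot_connect a b) => c d dc.
  have [cut|] := boolP ((c, d) \in [:: (x, y); (y, x)]); last first.
    by move=> keep; apply: connect1; rewrite /cut_edge dc keep.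
  by move: cut; rewrite !inE => /orP[] /eqP[-> ->] //; rewrite csym.
have sub : [set d : V * V | cut_edge x y d.1 d.2] \subset darts :\ (x, y) :\ (y, x).
  apply/subsetP => -[a b]; rewrite !inE /cut_edge /= !inE negb_or => /andP[-> /andP[]].
  by move=> -> ->.
have yx_dart : (y, x) \in darts :\ (x, y).
  by rewrite !inE xpair_eqE eq_sym (negbTE (dart_neq yx)) /= -mem_rot_sym.
have xy_dart : (x, y) \in darts by rewrite inE.
have card_cut : #|darts :\ (x, y) :\ (y, x)| + 2 = #|darts|.
  by rewrite [#|darts|](cardsD1 (x, y)) [#|darts :\ _|](cardsD1 (y, x)) xy_dart yx_dart addnC.
have := leq_trans (connected_darts_lb (cut_edge_sym x y) conn) (subset_leq_card sub).
by rewrite card_vert -card_darts -card_cut addn2 => /ltnW; rewrite ltnn.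
Qed.

(* Until it comes back along the reverse dart, the walk started on the dart
   (x, y) stays on the side of y of the cut edge; it cannot return to x. *)
Lemma rev_dart_orbit x y : y \in rot x -> fconnect f (x, y) (y, x).
Proof.
move=> yx; apply/negPn/negP => no_rev.
have xyD : (x, y) \in darts by rewrite inE.
have side k : 0 < k -> connect (cut_edge x y) y (iter k f (x, y)).1.
  elim: k => [//|[_ _|k IH _]]; first exact: connect0.
  rewrite iterS; have := iter_cstep_dart k.+1 xyD.
  have := IH isT; have := @fconnect_iter _ f k.+1 (x, y).
  case: (iter k.+1 f (x, y)) => a b /= reach ya; rewrite inE /= => ba.
  have not_xy : (a, b) != (x, y).
    by apply: contraNneq (cut_edge_disconnects yx) => -[ax _]; move: ya; rewrite ax.
  have not_yx : (a, b) != (y, x) by apply: contraNneq no_rev => <-.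
  apply: connect_trans ya (connect1 _).
  by rewrite /cut_edge ba !inE negb_or not_xy not_yx.
have := side (order f (x, y)) (order_gt0 _ _); rewrite (iter_order cstep_inj) /=.
exact/negP/cut_edge_disconnects.
Qed.

Lemma rot_orbit d x v : fconnect f d (x, v) -> v \in rot x ->
  {in rot x, forall z, fconnect f d (x, z)}.
Proof.
move=> dxv vx z zx.
have := fconnect_cycle (cycle_next (rot_uniq x)) vx z; rewrite zx => /iter_findex <-.
elim: (findex _ v z) => //= k IH.
have kx : iter k (next (rot x)) v \in rot x by elim: k {IH} => //= k; rewrite mem_next.
apply: connect_trans (connect_trans IH (rev_dart_orbit kx)) (fconnect1 _ _).
Qed.

Lemma fconnect_darts d z : d \in darts -> z \in darts -> fconnect f d z.
Proof.
case: d => x0 y0; rewrite inE /= => y0x0.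
have reach p a0 : path (fun a b => b \in rot a) a0 p ->
    (forall c, c \in rot a0 -> fconnect f (x0, y0) (a0, c)) ->
    forall c, c \in rot (last a0 p) -> fconnect f (x0, y0) (last a0 p, c).
  elim: p a0 => [|b p IH] a0 //= /andP[ba0 pth] a0_orbit; apply: IH pth _.
  apply: rot_orbit (connect_trans (a0_orbit _ ba0) (rev_dart_orbit ba0)) _.
  by rewrite -mem_rot_sym.
case: z => a c; rewrite inE /= => ca; have /connectP[p pth ea] := rot_connect x0 a.
by rewrite ea in ca *; apply: reach pth (rot_orbit (connect0 _ _) y0x0) c ca.
Qed.

Lemma order_cstep d : d \in darts -> order f d = 2 * (n + m).-1.
Proof.
move=> dD; rewrite /order -card_darts; apply: eq_card => z.
apply/idP/idP => [|zD]; last exact: fconnect_darts.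
by move/iter_findex <-; apply: iter_cstep_dart.
Qed.

End PlaneTree.

Section Contour.
Variables (n m : nat) (rot : vert n m -> seq (vert n m)).
Local Notation V := (vert n m).
Local Notation f := (cstep rot).
Local Notation E := (2 * (n + m).-1).

Lemma contour_iter d :
  contour rot d.1 d.2 = [seq (iter k f d).1 | k <- iota 0 E.+1].
Proof.
case: d => x y; rewrite /contour /=; congr (_ :: _).
elim: E (x, y) => //= k IH d; congr (_ :: _).
by rewrite IH -[2]/(1 + 1) iotaDl -map_comp; apply: eq_map => i /=; rewrite -iterSr.
Qed.

Hypothesis tree : is_plane_bip_tree rot.

Lemma mem_contour x y v : y \in rot x -> v \in contour rot x y.
Proof.
have [_ mem_rot_sym _ rot_connect _] := tree.
move=> yx; have xyD : (x, y) \in darts rot by rewrite inE.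
have [w wv] : exists w, w \in rot v.
  have /connectP[p pth ->] := rot_connect x v; case/lastP: p pth => [|p z]; first by exists y.
  by rewrite rcons_path last_rcons => /andP[_ zp]; exists (last x p); rewrite -mem_rot_sym.
have vwD : (v, w) \in darts rot by rewrite inE.
have dvw := fconnect_darts tree xyD vwD.
rewrite (contour_iter (x, y)); apply/mapP; exists (findex f (x, y) (v, w)).
  by rewrite mem_iota /= -(order_cstep tree xyD) add0n ltnS ltnW ?findex_max.
by rewrite iter_findex.
Qed.

Lemma size_undup_contour x y : y \in rot x -> size (undup (contour rot x y)) = n + m.
Proof.
move=> yx; rewrite -(card_uniqP (undup_uniq _)) -card_vert.
by rewrite cardT; apply: eq_cardT => v; rewrite mem_undup mem_contour.
Qed.

Section Reroot.
Variables (r s : V).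
Hypothesis sr : s \in rot r.

Local Notation x k := (iter k f (r, s)).1.
Local Notation j := (findex f (r, s) (s, r)).
Local Notation side := (connect (cut_edge rot r s) s).

Let rs_dart : (r, s) \in darts rot. Proof. by rewrite inE. Qed.
Let order_rs : order f (r, s) = E. Proof. exact: order_cstep. Qed.
Let iter_j : iter j f (r, s) = (s, r). Proof. exact/iter_findex/rev_dart_orbit. Qed.
Let iter_E : iter E f (r, s) = (r, s). Proof. by rewrite -order_rs; apply/iter_order/cstep_inj. Qed.

Let j_lt_E : j < E.
Proof. by rewrite -order_rs findex_max // rev_dart_orbit. Qed.

Let j_gt0 : 0 < j.
Proof. by rewrite lt0n findex_eq0 xpair_eqE negb_and (dart_neq tree). Qed.

Let iter_findex_eq k e : k < E -> iter k f (r, s) = e -> k = findex f (r, s) e.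
Proof. by move=> kE <-; rewrite findex_iter // order_rs. Qed.

(* The walk crosses the edge r s only at steps 0 and j. *)
Let side_iter_step k : 0 < k < E -> k != j -> side (x k.+1) = side (x k).
Proof.
move=> /andP[k_gt0 kE] kj.
have csym := sym_connect_sym (cut_edge_sym tree r s).
have := iter_cstep_dart tree k rs_dart; rewrite iterS.
have not_start : iter k f (r, s) != (r, s).
  by apply: contraTneq k_gt0 => /(iter_findex_eq kE) ->; rewrite findex0.
have not_rev : iter k f (r, s) != (s, r) by apply: contra kj => /eqP/(iter_findex_eq kE)->.
case: (iter k f (r, s)) not_start not_rev => a b /= ns nr; rewrite inE /= => ba.
apply/esym/(connect_closed csym); rewrite /cut_edge ba !inE negb_or /=.
by rewrite ns nr.
Qed.

Lemma side_before k : 0 < k <= j -> side (x k).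
Proof.
elim: k => [//|[_ _|k IH]]; first exact: connect0.
by move=> /andP[_ kj]; rewrite side_iter_step ?IH //; lia.
Qed.

Lemma side_after k : j < k <= E -> ~~ side (x k).
Proof.
elim: k => [//|k IH] /andP[jk kE]; have [->|jk'] := eqVneq k j.
  by rewrite iterS iter_j cut_edge_disconnects.
rewrite side_iter_step ?IH //; lia.
Qed.

Lemma contour_reroot : exists A B,
  [/\ contour rot r s = r :: rcons A s ++ r :: B,
      contour rot s (next (rot s) r) = rcons A s ++ r :: B ++ [:: s]
    & {in rcons A s, forall y, y \notin r :: B}].
Proof.
have eA : [seq x k | k <- iota 1 j] = rcons [seq x k | k <- iota 1 j.-1] s.
  rewrite -[in LHS](prednK j_gt0) -[j.-1.+1]addn1 iotaD map_cat add1n prednK //.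
  by rewrite -cats1 /= iter_j.
have eB : [seq x k | k <- iota j.+1 (E - j)] = r :: [seq x k | k <- iota j.+2 (E - j).-1].
  by rewrite -(prednK (_ : 0 < E - j)) ?subn_gt0 //= iter_j.
have split_iota i : iota i E = iota i j ++ iota (i + j) (E - j).
  by rewrite -iotaD subnKC // ltnW.
exists [seq x k | k <- iota 1 j.-1], [seq x k | k <- iota j.+2 (E - j).-1]; split.
- by rewrite (contour_iter (r, s)) /= split_iota map_cat eA eB.
- have shift : [seq (iter k f (f (r, s))).1 | k <- iota 0 E.+1] = [seq x k | k <- iota 1 E.+1].
    rewrite -[1]/(1 + 0) iotaDl -map_comp; apply: eq_map => k /=.
    by rewrite -iterSr.
  rewrite (contour_iter (cstep rot (r, s))) shift -[E.+1]addn1 iotaD split_iota.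
  rewrite !map_cat !add1n eA eB -catA /=.
  by rewrite iter_E.
- move=> y; rewrite -eA -eB => /mapP[k1 + ->]; rewrite mem_iota => k1j.
  apply/mapP => -[k2]; rewrite mem_iota => k2j ek.
  by have := @side_after k2; rewrite -ek side_before; lia.
Qed.

End Reroot.

End Contour.

Lemma half_shift_mod2 I I' d d' e lP lQ cP N :
  ~~ odd N -> (lP + lQ).+1 = N -> lP = cP.+1 -> d + cP = d' + lQ ->
  odd (I + I') = odd lP ->
  (I' + (d' + e)./2) %% 2 = ((I + (d + e)./2) %% 2 + N./2) %% 2.
Proof. by move=> *; rewrite -!divn2; lia. Qed.

Section Parity.
Variables (n m : nat) (rot : vert n m -> seq (vert n m)).
Local Notation f := (cstep rot).
Hypothesis tree : is_plane_bip_tree rot.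

Lemma iT_pairs r u : iT rot r u =
  (pairs inv_w (cstring rot r u) +
   (pairs clab_w (cstring rot r u) + (if n <= m then m - n else n - m)./2)./2) %% 2.
Proof. by rewrite /iT npairs_inv npairs_clab. Qed.

Lemma iT_cstep d : d \in darts rot -> ~~ odd (n + m) ->
  iT rot (f d).1 (f d).2 = (iT rot d.1 d.2 + (n + m)./2) %% 2.
Proof.
case: d => r s dD even_nm; have sr : s \in rot r by rewrite inE in dD.
have [A [B [before after disj]]] := contour_reroot tree sr.
rewrite -[(r, s).1]/r -[(r, s).2]/s -[(f _).1]/s -[(f _).2]/(next (rot s) r).
rewrite !iT_pairs !cstring_tokens before after.
rewrite tokens_reroot_before // tokens_reroot_after //.
have labels := size_undup_contour tree sr.
rewrite before -count_Lab_tokens0 tokens_reroot_before // in labels.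
have labP := count_Lab_tokens0 (rcons A s).
rewrite -count_Cl_tokens0 tokens_rcons_nil in labP.
have notr : {in tokens [::] (rcons A s) [:: s], forall t, t != Lab r}.
  move=> [y|] //= /mem_tokens_Lab yA.
  by apply: contraNneq (disj y yA) => -[->]; apply: mem_head.
(* Abstracted, so that simplification cannot unfold them. *)
move: (tokens [::] (rcons A s) [:: s]) (tokens [:: r] (r :: B) [::]) => P Q in labels labP notr *.
apply: (half_shift_mod2 _ even_nm _ _ (pairs_clab_reroot r P Q) (odd_pairs_inv_reroot Q notr)).
  by rewrite -labels /= !count_cat /= add0n.
by move: labP; rewrite !count_cat /= !addn0 addn1.
Qed.

Lemma iT_iter_cstep k d : d \in darts rot -> ~~ odd (n + m) ->
  iT rot (iter k f d).1 (iter k f d).2 = (iT rot d.1 d.2 + k * (n + m)./2) %% 2.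
Proof.
move=> dD even_nm; elim: k => [|k IH]; first by rewrite addn0 modn_small // ltn_pmod.
by rewrite iterS iT_cstep ?iter_cstep_dart // IH modnDml mulSn addnA addnAC.
Qed.

End Parity.

Theorem mainTheorem3 (n m : nat) (rot : vert n m -> seq (vert n m)) :
  is_plane_bip_tree rot -> ~~ odd (n + m) ->
  forall (i j : 'I_n) (u u' : vert n m),
    u \in rot (inl i) -> u' \in rot (inl j) ->
    iT rot (inl i) u = iT rot (inl j) u'.
Proof.
move=> tree even_nm i j u u' ui uj.
have dD : (inl i, u) \in darts rot by rewrite inE.
have /iter_findex reach : fconnect (cstep rot) (inl i, u) (inl j, u').
  by apply: fconnect_darts; rewrite ?inE.
set k := findex _ _ _ in reach.
have k_even : ~~ odd k by have := is_white_iter_cstep tree k dD; rewrite reach.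
have := iT_iter_cstep tree k dD even_nm; rewrite reach /= => ->.
have iT_lt2 : iT rot (inl i) u < 2 by rewrite ltn_pmod.
by rewrite -(odd_double_half k) (negbTE k_even) add0n -muln2 -mulnAC addnC modnMDl modn_small.
Qed.
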